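(* Let $(F,\phi)$ be an extended representation graph for $E$ and $w\in F^0$ with $\phi(w)=v$. Then: (i) if $w$ is a source or receives an edge lying over a nonspecial real edge, $\phi$ induces a bijection $F^{\ge0}_w\to X_v$; (ii) if $w$ receives an edge lying over a special real edge $e$, $\phi$ induces a bijection from $F^{\ge0}_w$ onto the set of $x\in X_v$ that either have length $0$ or whose first edge is not $e^*$; (iii) if $w$ receives an edge lying over a ghost edge, $\phi$ induces a bijection from $F^{\ge0}_w$ onto the set of $x\in X_v$ that either have length $0$ or whose first edge is a ghost edge. In particular, $\phi$ maps every path in $F$ to a basis path.
   Context: $E=(E^0,E^1,s,r)$ is a row-finite directed graph; a vertex is regular if it emits an edge; for each regular $v$ a fixed edge $e^v\in s^{-1}(v)$ is called special, all other edges nonspecial. Paths of length $n\ge1$ are words $y_1\dots y_n$ of edges with $r(y_i)=s(y_{i+1})$; paths of length $0$ are vertices. For a graph $F$ and $w\in F^0$, $F^{\ge0}_w$ is the set of all paths in $F$ (of any length $\ge0$) with source $w$; a graph homomorphism maps paths to paths letterwise. The double graph $E_d$ has vertices $E^0$ and edges $e$ (real) and $e^*$ (ghost) for $e\in E^1$, with $s_d(e)=s(e),r_d(e)=r(e),s_d(e^* )=r(e),r_d(e^* )=s(e)$. For $p=e_1\dots e_n$ set $p^*=e_n^*\dots e_1^*$. The set $X$ of basis paths consists of the paths in $E_d$: vertices; $p,p^*$ for paths $p$ of length $\ge1$ in $E$; $pq^*$ with $p=e_1\dots e_k,q=f_1\dots f_n$ of length $\ge1$ in $E$, $r(p)=r(q)$,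 and $e_k\ne f_n$ or $e_k=f_n$ nonspecial. $X_v=\{x\in X: s_d(x)=v\}$. An extended representation graph for $E$ is a pair $(F,\phi)$, $F$ a directed graph, $\phi:F\to E_d$ a graph homomorphism, such that for every $w\in F^0$: (i) $w$ is a source or receives exactly one edge $f_w$; (ii) if $w$ is a source or $\phi(f_w)$ is a nonspecial real edge, $\phi$ maps $s^{-1}(w)$ bijectively onto $s_d^{-1}(\phi(w))$; (iii) if $\phi(f_w)$ is a special real edge, $\phi$ maps $s^{-1}(w)$ bijectively onto $s_d^{-1}(\phi(w))\setminus\{\phi(f_w)^*\}$; (iv) if $\phi(f_w)$ is a ghost edge, $\phi$ maps $s^{-1}(w)$ bijectively onto the ghost edges in $s_d^{-1}(\phi(w))$. A vertex or edge of $F$ lies over its image under $\phi$. *)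

From Stdlib Require Import List.
Import ListNotations.
Set Implicit Arguments.

Record graph := Graph {
  vert : Type;
  edge : Type;
  src : edge -> vert;
  rng : edge -> vert }.
Arguments src {g}.
Arguments rng {g}.

Definition row_finite (G : graph) : Prop :=
  forall v : vert G, exists ls : list (edge G), forall e, src e = v -> In e ls.

Definition regular {G : graph} (v : vert G) : Prop := exists e : edge G, src e = v.

(* [special] marks the chosen edge e^v for each regular vertex v. *)
Definition special_choice {G : graph} (special : edge G -> Prop) : Prop :=
  forall v : vert G, regular v -> exists! e, src e = v /\ special e.

(* The double graph E_d: edges inl e = e (real) and inr e = e^* (ghost). *)
Definition double (G : graph) : graph :=
  @Graph (vert G) (edge G + edge G)
    (fun d => match d with inl e => src e | inr e => rng e end)
    (fun d => match d with inl e => rng e | inr e => src e end).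

(* A path of length n >= 0 with source v, given as its list of edges;
   the path of length 0 is the vertex v itself (empty list). *)
Fixpoint walk {G : graph} (v : vert G) (l : list (edge G)) : Prop :=
  match l with
  | [] => True
  | d :: l' => src d = v /\ walk (rng d) l'
  end.

Fixpoint chain {G : graph} (l : list (edge G)) : Prop :=
  match l with
  | [] => True
  | e :: l' => match l' with
               | [] => True
               | f :: _ => rng e = src f /\ chain l'
               end
  end.

Record hom (F G : graph) := Hom {
  hv : vert F -> vert G;
  he : edge F -> edge G;
  hom_src : forall f, src (he f) = hv (src f);
  hom_rng : forall f, rng (he f) = hv (rng f) }.
Arguments hv {F G}.
Arguments he {F G}.

(* The set X of basis paths in E_d, a path being (source vertex, edge list). *)
Definition basis_path {E : graph} (special : edge E -> Prop)
  (v : vert E) (l : list (edge (double E))) : Prop :=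
  @walk (double E) v l /\
  ( l = []
  \/ (exists p : list (edge E), p <> [] /\ chain p /\ l = map inl p)
  \/ (exists q : list (edge E), q <> [] /\ chain q /\ l = map inr (rev q))
  \/ (exists (p' q' : list (edge E)) (ek fn : edge E),
        chain (p' ++ [ek]) /\ chain (q' ++ [fn]) /\ rng ek = rng fn /\
        (ek <> fn \/ (ek = fn /\ ~ special ek)) /\
        l = map inl (p' ++ [ek]) ++ map inr (rev (q' ++ [fn])))).

Definition bij_onto {A B : Type} (P : A -> Prop) (Q : B -> Prop) (g : A -> B) : Prop :=
  (forall x, P x -> Q (g x)) /\
  (forall x y, P x -> P y -> g x = g y -> x = y) /\
  (forall y, Q y -> exists x, P x /\ g x = y).

Definition is_ghost {E : graph} (d : edge (double E)) : Prop :=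
  exists e : edge E, d = inr e.

Definition ext_rep_graph {E : graph} (special : edge E -> Prop)
  (F : graph) (phi : hom F (double E)) : Prop :=
  forall w : vert F,
    (forall f1 f2 : edge F, rng f1 = w -> rng f2 = w -> f1 = f2) /\
    (((forall f : edge F, rng f <> w) \/
     (exists (f : edge F) (e : edge E), rng f = w /\ he phi f = inl e /\ ~ special e)) ->
     bij_onto (fun f : edge F => src f = w)
              (fun d : edge (double E) => src d = hv phi w) (he phi)) /\
    (forall (f : edge F) (e : edge E), rng f = w -> he phi f = inl e -> special e ->
     bij_onto (fun f' : edge F => src f' = w)
              (fun d : edge (double E) => src d = hv phi w /\ d <> inr e) (he phi)) /\
    (forall (f : edge F) (e : edge E), rng f = w -> he phi f = inr e ->
     bij_onto (fun f' : edge F => src f' = w)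
              (fun d : edge (double E) => src d = hv phi w /\ is_ghost d) (he phi)).

From Stdlib Require Import List Classical.
Import ListNotations.
Set Implicit Arguments.
Unset Strict Implicit.

(** Basis paths are exactly the paths of [E_d] accepted by a small automaton
    whose state is the last edge read: after a special real edge [e] the edge
    [e^*] is forbidden, and after a ghost edge only ghost edges may follow.
    Conditions (ii)-(iv) of an extended representation graph say that at
    every vertex [w] of [F], [phi] maps the edges leaving [w] bijectively onto
    the edges leaving [phi w] that are allowed in the state given by the edge
    entering [w].  Induction on the length then makes [phi] a bijection from
    the paths leaving [w] onto the accepted paths leaving [phi w]; parts
    (i)-(iii) correspond to the three kinds of initial state. *)

Lemma bij_onto_iff_codomain {A B : Type} (P : A -> Prop) (Q Q' : B -> Prop)
  (g : A -> B) :
  bij_onto P Q g -> (forall y, Q y <-> Q' y) -> bij_onto P Q' g.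
Proof.
  intros (Hinto & Hinj & Hsurj) HQ. split; [|split]; [| exact Hinj |].
  - intros x Hx. apply HQ, Hinto, Hx.
  - intros y Hy. apply Hsurj, HQ, Hy.
Qed.

Lemma walk_chain (G : graph) (v : vert G) (l : list (edge G)) :
  walk v l -> chain l.
Proof.
  revert v; induction l as [|a [|b l] IH]; simpl; auto.
  intros v (_ & Hb & Hw). split; [symmetry; exact Hb|].
  exact (IH _ (conj Hb Hw)).
Qed.

Lemma chain_app_l (G : graph) (l1 l2 : list (edge G)) :
  chain (l1 ++ l2) -> chain l1.
Proof.
  induction l1 as [|a [|b l1] IH]; simpl; auto.
  intros [Hab Hch]. split; [exact Hab | exact (IH Hch)].
Qed.

Lemma chain_app_r (G : graph) (l1 l2 : list (edge G)) :
  chain (l1 ++ l2) -> chain l2.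
Proof.
  induction l1 as [|a l1 IH]; simpl; auto.
  intros Hch. apply IH. destruct (l1 ++ l2); simpl in *; tauto.
Qed.

Lemma chain_snoc (G : graph) (l : list (edge G)) (b a : edge G) :
  chain (l ++ [b]) -> rng b = src a -> chain (l ++ [b; a]).
Proof.
  induction l as [|c [|d l] IH]; simpl; tauto.
Qed.

Lemma chain_map_inl (E : graph) (p : list (edge E)) :
  @chain (double E) (map inl p) -> chain p.
Proof.
  induction p as [|a [|b p] IH]; simpl; auto.
  intros [Hab Hch]. split; [exact Hab | exact (IH Hch)].
Qed.

Lemma chain_map_inr (E : graph) (q : list (edge E)) :
  @chain (double E) (map inr q) -> chain (rev q).
Proof.
  induction q as [|a [|b q] IH]; simpl; auto.
  intros [Hab Hch]. rewrite <- app_assoc. apply chain_snoc.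
  - exact (IH Hch).
  - symmetry; exact Hab.
Qed.

Section Admissible.

Variables (E : graph) (special : edge E -> Prop).

Definition allowed_after (prev : option (edge (double E)))
  (d : edge (double E)) : Prop :=
  match prev with
  | None => True
  | Some (inl e) => special e -> d <> inr e
  | Some (inr _) => is_ghost d
  end.

Fixpoint admissible (prev : option (edge (double E)))
  (l : list (edge (double E))) : Prop :=
  match l with
  | [] => True
  | d :: l' => allowed_after prev d /\ admissible (Some d) l'
  end.

Lemma admissible_iff (prev : option (edge (double E))) (x : list (edge (double E))) :
  admissible prev x <->
  admissible None x /\ (x = [] \/ exists d x', x = d :: x' /\ allowed_after prev d).
Proof.
  destruct x as [|d x]; simpl; split; auto.
  - intros [Hd Hx]. split; [split; auto | right; exists d, x; auto].
  - intros [[_ Hx] [Hnil | (d' & x' & Heq & Hd)]]; [discriminate|].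
    injection Heq as -> ->. auto.
Qed.

Lemma allowed_after_real (prev : option (edge (double E))) (a : edge E) :
  (forall e, prev <> Some (inr e)) -> allowed_after prev (inl a).
Proof.
  destruct prev as [[e|e]|]; simpl; intros Hprev; auto.
  - intros _; discriminate.
  - exfalso; exact (Hprev e eq_refl).
Qed.

Lemma admissible_ghosts (e : edge E) (q : list (edge E)) :
  admissible (Some (inr e)) (map inr q).
Proof.
  revert e; induction q as [|a q IH]; simpl; auto.
  intros e. split; [exists a; reflexivity | apply IH].
Qed.

Lemma admissible_reals_app (prev : option (edge (double E))) (p : list (edge E))
  (a : edge E) (x : list (edge (double E))) :
  (forall e, prev <> Some (inr e)) -> admissible (Some (inl a)) x ->
  admissible prev (map inl (p ++ [a]) ++ x).
Proof.
  revert prev; induction p as [|b p IH]; simpl; intros prev Hprev Hx.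
  - split; [apply allowed_after_real, Hprev | exact Hx].
  - split; [apply allowed_after_real, Hprev|].
    apply IH; [intros e; discriminate | exact Hx].
Qed.

Lemma admissible_after_ghost (e : edge E) (x : list (edge (double E))) :
  admissible (Some (inr e)) x -> exists q, x = map inr q.
Proof.
  revert e; induction x as [|d x IH]; simpl; intros e0.
  - intros _. exists []; reflexivity.
  - intros [[e ->] Hx]. destruct (IH e Hx) as [q ->]. exists (e :: q); reflexivity.
Qed.

Lemma admissible_split (prev : option (edge (double E))) (x : list (edge (double E))) :
  admissible prev x -> exists p q, x = map inl p ++ map inr q.
Proof.
  revert prev; induction x as [|[e|e] x IH]; simpl; intros prev.
  - intros _. exists [], []; reflexivity.
  - intros [_ Hx]. destruct (IH _ Hx) as (p & q & ->). exists (e :: p), q; reflexivity.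
  - intros [_ Hx]. destruct (admissible_after_ghost Hx) as [q ->].
    exists [], (e :: q); reflexivity.
Qed.

Lemma admissible_junction (prev : option (edge (double E)))
  (l r : list (edge (double E))) (a b : edge (double E)) :
  admissible prev (l ++ a :: b :: r) -> allowed_after (Some a) b.
Proof.
  revert prev; induction l as [|c l IH]; simpl; intros prev.
  - intros (_ & Hb & _). exact Hb.
  - intros [_ Hl]. exact (IH _ Hl).
Qed.

Lemma basis_path_admissible (v : vert E) (x : list (edge (double E))) :
  basis_path special v x -> admissible None x.
Proof.
  intros [_ [-> | [(p & Hp & _ & ->) | [(q & _ & _ & ->) |
    (p' & q' & ek & fn & _ & _ & _ & Hek & ->)]]]].
  - exact I.
  - destruct (exists_last Hp) as (p' & a & ->). rewrite <- app_nil_r.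
    apply admissible_reals_app; [intros e; discriminate | exact I].
  - destruct (rev q) as [|e q']; simpl; [exact I|].
    split; [exact I | apply admissible_ghosts].
  - apply admissible_reals_app; [intros e; discriminate|].
    rewrite rev_unit. split; [| apply admissible_ghosts].
    intros Hs Heq. injection Heq as ->. destruct Hek as [Hne | [_ Hns]]; auto.
Qed.

Lemma admissible_walk_basis_path (v : vert E) (x : list (edge (double E))) :
  @walk (double E) v x -> admissible None x -> basis_path special v x.
Proof.
  intros Hw Hadm. split; [exact Hw|].
  pose proof (walk_chain Hw) as Hch.
  destruct (admissible_split Hadm) as (p & q & ->).
  destruct q as [|fn q]; [|destruct p as [|a p]].
  - rewrite app_nil_r in *. destruct p as [|a p]; [left; reflexivity|].
    right; left. exists (a :: p).
    split; [discriminate | split; [exact (chain_map_inl Hch) | reflexivity]].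
  - right; right; left. exists (rev (fn :: q)). split; [|split].
    + simpl. destruct (rev q); discriminate.
    + exact (chain_map_inr Hch).
    + rewrite rev_involutive. reflexivity.
  - destruct (exists_last (l := a :: p) ltac:(discriminate)) as (p' & ek & Hp).
    rewrite Hp in *. clear a p Hp.
    assert (Hx : map inl (p' ++ [ek]) ++ map inr (fn :: q)
                 = map inl p' ++ inl ek :: inr fn :: map inr q)
      by (rewrite map_app, <- app_assoc; reflexivity).
    right; right; right. exists p', (rev q), ek, fn.
    split; [exact (chain_map_inl (chain_app_l Hch))|].
    split; [exact (chain_map_inr (chain_app_r Hch))|].
    split; [rewrite Hx in Hch; exact (proj1 (chain_app_r Hch))|].
    split.
    + rewrite Hx in Hadm. pose proof (admissible_junction Hadm) as Hfn.
      destruct (classic (ek = fn)) as [<- | Hne]; [|left; exact Hne].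
      right. split; [reflexivity|]. intros Hs. exact (Hfn Hs eq_refl).
    + rewrite rev_unit, rev_involutive. reflexivity.
Qed.

Lemma basis_path_iff (v : vert E) (x : list (edge (double E))) :
  basis_path special v x <-> @walk (double E) v x /\ admissible None x.
Proof.
  split.
  - intros Hx. split; [exact (proj1 Hx) | exact (basis_path_admissible Hx)].
  - intros [Hw Hadm]. exact (admissible_walk_basis_path Hw Hadm).
Qed.

End Admissible.

Section RepresentationGraph.

Variables (E : graph) (special : edge E -> Prop) (F : graph) (phi : hom F (double E)).
Hypothesis HF : ext_rep_graph special phi.

Definition locally_bijective (w : vert F) (prev : option (edge (double E))) : Prop :=
  bij_onto (fun f : edge F => src f = w)
    (fun d => src d = hv phi w /\ allowed_after special prev d) (he phi).

Lemma locally_bijective_start (w : vert F) :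
  ((forall f : edge F, rng f <> w) \/
   (exists (f : edge F) (e : edge E), rng f = w /\ he phi f = inl e /\ ~ special e)) ->
  locally_bijective w None.
Proof.
  intros Hw. destruct (HF w) as (_ & Hstart & _).
  apply (bij_onto_iff_codomain (Hstart Hw)). simpl; tauto.
Qed.

Lemma locally_bijective_after (f : edge F) :
  locally_bijective (rng f) (Some (he phi f)).
Proof.
  destruct (HF (rng f)) as (_ & Hreal & Hspecial & Hghost). unfold locally_bijective.
  destruct (he phi f) as [e|e] eqn:Hf; simpl.
  - destruct (classic (special e)) as [Hs | Hns].
    + apply (bij_onto_iff_codomain (Hspecial f e eq_refl Hf Hs)). tauto.
    + refine (bij_onto_iff_codomain (Hreal _) _); [|tauto].
      right; exists f, e; auto.
  - apply (bij_onto_iff_codomain (Hghost f e eq_refl Hf)). tauto.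
Qed.

Lemma exists_locally_bijective (w : vert F) : exists prev, locally_bijective w prev.
Proof.
  destruct (classic (exists f : edge F, rng f = w)) as [[f <-] | Hsource].
  - exists (Some (he phi f)). apply locally_bijective_after.
  - exists None. apply locally_bijective_start. left.
    intros f Hf. apply Hsource. exists f; exact Hf.
Qed.

Lemma map_walk_admissible (l : list (edge F)) (w : vert F)
  (prev : option (edge (double E))) :
  locally_bijective w prev -> walk w l ->
  @walk (double E) (hv phi w) (map (he phi) l) /\
  admissible special prev (map (he phi) l).
Proof.
  revert w prev; induction l as [|f l IH]; simpl; auto.
  intros w prev Hloc [Hf Hl].
  destruct (proj1 Hloc f Hf) as [Hsrc Hallowed].
  destruct (IH _ _ (locally_bijective_after f) Hl) as [Hw Hadm].
  rewrite <- (hom_rng phi f) in Hw. tauto.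
Qed.

Lemma map_walk_injective (l1 l2 : list (edge F)) (w : vert F)
  (prev : option (edge (double E))) :
  locally_bijective w prev -> walk w l1 -> walk w l2 ->
  map (he phi) l1 = map (he phi) l2 -> l1 = l2.
Proof.
  revert l2 w prev; induction l1 as [|f1 l1 IH];
    intros [|f2 l2] w prev Hloc; simpl; try discriminate; auto.
  intros [Hf1 Hl1] [Hf2 Hl2] Heq. injection Heq as Hf Hl.
  assert (f1 = f2) as <- by exact (proj1 (proj2 Hloc) f1 f2 Hf1 Hf2 Hf).
  f_equal. exact (IH l2 _ _ (locally_bijective_after f1) Hl1 Hl2 Hl).
Qed.

Lemma map_walk_surjective (x : list (edge (double E))) (w : vert F)
  (prev : option (edge (double E))) :
  locally_bijective w prev -> @walk (double E) (hv phi w) x ->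
  admissible special prev x -> exists l, walk w l /\ map (he phi) l = x.
Proof.
  revert w prev; induction x as [|d x IH]; intros w prev Hloc.
  - intros _ _. exists []; split; [exact I | reflexivity].
  - intros [Hd Hx] [Hallowed Hadm].
    destruct (proj2 (proj2 Hloc) d (conj Hd Hallowed)) as (f & Hf & <-).
    rewrite hom_rng in Hx.
    destruct (IH _ _ (locally_bijective_after f) Hx Hadm) as (l & Hl & <-).
    exists (f :: l). split; [split; assumption | reflexivity].
Qed.

Lemma walks_bij_admissible (w : vert F) (prev : option (edge (double E))) :
  locally_bijective w prev ->
  bij_onto (fun l => walk w l)
    (fun x => @walk (double E) (hv phi w) x /\ admissible special prev x)
    (map (he phi)).
Proof.
  intros Hloc. split; [|split].
  - intros l Hl. exact (map_walk_admissible Hloc Hl).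
  - intros l1 l2 Hl1 Hl2. exact (map_walk_injective Hloc Hl1 Hl2).
  - intros x [Hx Hadm]. exact (map_walk_surjective Hloc Hx Hadm).
Qed.

End RepresentationGraph.

Theorem lemma5p1 (E : graph) (special : edge E -> Prop)
  (HE : row_finite E) (Hsp : special_choice special)
  (F : graph) (phi : hom F (double E)) (HF : ext_rep_graph special phi)
  (w : vert F) (v : vert E) (Hwv : hv phi w = v) :
  (* (i) *)
  (((forall f : edge F, rng f <> w) \/
    (exists (f : edge F) (e : edge E), rng f = w /\ he phi f = inl e /\ ~ special e)) ->
   bij_onto (fun l : list (edge F) => walk w l)
            (fun x : list (edge (double E)) => basis_path special v x)
            (map (he phi))) /\
  (* (ii) *)
  (forall (f : edge F) (e : edge E), rng f = w -> he phi f = inl e -> special e ->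
   bij_onto (fun l : list (edge F) => walk w l)
            (fun x : list (edge (double E)) =>
               basis_path special v x /\ (x = [] \/ exists d x', x = d :: x' /\ d <> inr e))
            (map (he phi))) /\
  (* (iii) *)
  (forall (f : edge F) (e : edge E), rng f = w -> he phi f = inr e ->
   bij_onto (fun l : list (edge F) => walk w l)
            (fun x : list (edge (double E)) =>
               basis_path special v x /\ (x = [] \/ exists d x', x = d :: x' /\ is_ghost d))
            (map (he phi))) /\
  (* in particular *)
  (forall (w' : vert F) (l : list (edge F)),
     walk w' l -> basis_path special (hv phi w') (map (he phi) l)).
Proof.
  subst v. split; [|split; [|split]].
  - intros Hw. apply (bij_onto_iff_codomain
      (walks_bij_admissible HF (locally_bijective_start HF Hw))).
    intros x. rewrite basis_path_iff. tauto.
  - intros f e Hf He Hs. pose proof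
      (walks_bij_admissible HF (locally_bijective_after HF f)) as Hbij.
    rewrite Hf, He in Hbij. apply (bij_onto_iff_codomain Hbij).
    intros x. rewrite basis_path_iff, admissible_iff. simpl. firstorder.
  - intros f e Hf He. pose proof
      (walks_bij_admissible HF (locally_bijective_after HF f)) as Hbij.
    rewrite Hf, He in Hbij. apply (bij_onto_iff_codomain Hbij).
    intros x. rewrite basis_path_iff, admissible_iff. simpl. firstorder.
  - intros w' l Hl. destruct (exists_locally_bijective HF w') as [prev Hloc].
    destruct (map_walk_admissible HF Hloc Hl) as [Hw Hadm].
    apply basis_path_iff.
    split; [exact Hw | exact (proj1 (proj1 (admissible_iff _ _ _) Hadm))].
Qed.
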